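(* Let $\mu$ be a non-trivial continuous (atomless) positive measure on $\mathbb T$, singular with respect to Lebesgue measure, supported by a closed set $E\subset\mathbb T$ of finite entropy. Then for any $\varepsilon,\delta>0$ there exists an arc $I$ such that $0<\mu(I)<\delta$ and $\operatorname{Ent}_I(E)/\mu(I)<\varepsilon$.
   Context: $m$ is normalized Lebesgue measure on $\mathbb T$, and $|J|=m(J)$ for an arc $J$. A closed set $E\subset\mathbb T$ with $m(E)=0$ has finite entropy if $\sum_\ell |I_\ell|\log\frac1{|I_\ell|}<\infty$, where $\mathbb T\setminus E=\bigsqcup_\ell I_\ell$ with disjoint open arcs $I_\ell$ (equivalently $\int_{\mathbb T}\log\operatorname{dist}(\zeta,E)\,dm(\zeta)>-\infty$). For an arc $I$, the local entropy is $\operatorname{Ent}_I(E)=\sum_\ell |I_\ell|\log\frac{1}{|I_\ell|}$, where $I_\ell$ are the disjoint open arcs with $I\setminus E=\bigsqcup_\ell I_\ell$. *)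

From HB Require Import structures.
From mathcomp Require Import all_boot all_order all_algebra.
From mathcomp Require Import all_classical all_reals all_analysis.
Set Implicit Arguments. Unset Strict Implicit. Unset Printing Implicit Defensive.
Import Order.TTheory GRing.Theory Num.Theory.
Import numFieldNormedType.Exports.
Local Open Scope classical_set_scope.
Local Open Scope ring_scope.

(* The circle T is R/Z, parametrized by [0,1).  Normalized
   Lebesgue measure m on T is then Lebesgue measure of the lift.
   - A subset of T is represented by its 1-periodic lift to R.
   - A measure on T is represented by a measure on the (Borel) reals that is
     concentrated on [0,1).
   - An (open) arc of T is the image of an open interval ]a,b[ with
     0 < b - a <= 1; its lift is the union of the translates ]a+k,b+k[. *)

Section Circle.
Context {R : realType}.

Definition periodic1 (E : set R) : Prop := forall x, E x <-> E (x + 1).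

Definition arc_lift (a b : R) : set R :=
  [set x | exists k : int, a + k%:~R < x < b + k%:~R].

(* the connected components of an open set U of R that are bounded open
   intervals, encoded by their endpoints *)
Definition components (U : set R) : set (R * R) :=
  [set ab | ab.1 < ab.2 /\ `]ab.1, ab.2[ `<=` U /\ ~ U ab.1 /\ ~ U ab.2].

Definition xlog (l : R) : R := l * ln (l^-1).

(* sum over the complementary arcs I_l of E in T (E periodic, nonempty):
   one lift per arc, the one with left endpoint in [0,1) *)
Definition entropy (E : set R) : \bar R :=
  (\esum_(ab in [set ab | components (~` E) ab /\ (0 <= ab.1 < 1)%R])
     (xlog (ab.2 - ab.1))%:E)%E.

Definition finite_entropy (E : set R) : Prop := (entropy E < +oo)%E.

(* local entropy Ent_I(E) for the arc I = image of ]a,b[, 0 < b - a <= 1: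
   the components of I \ E correspond to those of ]a,b[ \ E *)
Definition local_entropy (E : set R) (a b : R) : \bar R :=
  (\esum_(ab in components (`]a, b[ `\` E)) (xlog (ab.2 - ab.1))%:E)%E.

End Circle.

(** Cut [0,1) into [n] cells of length [1/n].  By finite entropy, the gaps of
    [E] shorter than [1/n] have total entropy at most [eps mu(T) / 2] once [n]
    is large, and by compactness an atomless finite measure gives every cell
    measure below [delta] once [n] is large.  Comparing the two sums over the
    cells yields a cell [J] with [mu(J) > 0] whose gaps have entropy below
    [eps mu(J)].  The arc spanned by the first and last points of [E] in [J]
    carries at least [mu(J)], as [mu] lives on [E] and has no atoms, and its
    complementary arcs are gaps of [E] inside [J]. *)

From HB Require Import structures.
From mathcomp Require Import all_boot all_order all_algebra.
From mathcomp Require Import all_classical all_reals all_analysis.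
From mathcomp Require Import finmap measurable_realfun.
From mathcomp.algebra_tactics Require Import lra.
From mathcomp Require Import zify.
Set Implicit Arguments. Unset Strict Implicit. Unset Printing Implicit Defensive.
Import Order.TTheory GRing.Theory Num.Theory.
Import numFieldNormedType.Exports.
Local Open Scope classical_set_scope.
Local Open Scope ring_scope.

Section esum_complements.
Context {R : realType} {T : choiceType}.
Local Open Scope ereal_scope.

Lemma sub_esum (A B : set T) (f : T -> \bar R) :
  A `<=` B -> \esum_(t in A) f t <= \esum_(t in B) f t.
Proof.
move=> AB; apply: ge_ereal_sup => _ [X [finX XA] <-].
by apply: ereal_sup_ubound; exists X => //; split => //; exact: subset_trans AB.
Qed.

Lemma fsume_lt_exists (D : set T) (a b : T -> \bar R) : finite_set D ->
  \sum_(t \in D) a t < \sum_(t \in D) b t -> exists2 t, D t & a t < b t.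
Proof.
move=> finD ab; apply: contrapT => no_t; move: ab; apply/negP; rewrite -leNgt.
apply: lee_fsum => // t Dt; rewrite leNgt; apply/negP => abt.
by apply: no_t; exists t.
Qed.

(** Take a finite [A] carrying all but [eta] of the sum and [lam] the least
    size of a member of [A]: a family of members of size below [lam] avoids [A]. *)
Lemma esum_small_tail (S : set T) (f : T -> \bar R) (h : T -> R) (eta : R) :
  (forall t, S t -> 0 <= f t) -> (forall t, S t -> 0 < h t)%R ->
  \esum_(t in S) f t < +oo -> (0 < eta)%R ->
  exists2 lam : R, (0 < lam)%R & forall Y, Y `<=` S ->
    (forall t, Y t -> h t < lam)%R -> \esum_(t in Y) f t <= eta%:E.
Proof.
move=> f0 h0 Soo eta0.
have Sfin : \esum_(t in S) f t \is a fin_num by rewrite ge0_fin_numE// esum_ge0.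
set s := fine (\esum_(t in S) f t).
have sE : \esum_(t in S) f t = s%:E by rewrite fineK.
have : (s - eta)%:E < \esum_(t in S) f t by rewrite sE lte_fin; lra.
move=> /ereal_sup_gt[_ [A [finA AS] <-]] sumA.
pose lam := (\big[Num.min/1]_(t <- fset_set A) h t)%R.
exists lam => [|Y YS Ylam].
  rewrite /lam big_seq; elim/big_ind: _ => // [x y|t]; first by rewrite lt_min => -> ->.
  by rewrite in_fset_set// => /set_mem/AS/h0.
have YSA : Y `<=` S `&` ~` A.
  move=> t Yt; split; first exact: YS.
  move=> At; have := Ylam t Yt; apply/negP; rewrite -leNgt.
  by apply: ge_bigmin_seq => //; rewrite in_fset_set// mem_set.
apply: le_trans (sub_esum f YSA) _.
have SA_gt : (s - eta)%:E < \esum_(t in S `&` A) f t.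
  apply: lt_le_trans sumA _; apply: esum_ge; exists A => //.
  by split => // t At; split => //; exact: AS.
have SnA0 : 0 <= \esum_(t in S `&` ~` A) f t by apply: esum_ge0 => t [/f0].
move: SA_gt SnA0 (esumID A S f f0); rewrite sE.
case: (\esum_(t in S `&` A) f t) => [x| |];
  case: (\esum_(t in S `&` ~` A) f t) => [y| |] //=.
by rewrite !lte_fin !lee_fin => ? ? [sxy]; lra.
Qed.

End esum_complements.

Section cells.
Context {R : realType}.

Lemma cell_overlap_eq (n i j : nat) : (0 < n)%N ->
  i%:R / n%:R < j.+1%:R / n%:R :> R -> j%:R / n%:R < i.+1%:R / n%:R :> R -> i = j.
Proof.
move=> n0; rewrite !ltr_pM2r ?invr_gt0 ?ltr0n// !ltr_nat => ij ji.
by apply/eqP; rewrite eqn_leq -ltnS ij -ltnS ji.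
Qed.

Lemma cell_width (n j : nat) : (0 < n)%N ->
  j.+1%:R / n%:R - j%:R / n%:R = n%:R^-1 :> R.
Proof. by move=> n0; rewrite -mulrBl -natrB// subSnn mul1r. Qed.

Lemma itv_sub_ball (u v r : R) : 0 < r -> v - u < r -> `[u, v] `<=` ball u r.
Proof.
move=> r0 vu_r x; rewrite ball_itv /= !in_itv /= => /andP[ux xv].
by apply/andP; split; lra.
Qed.

End cells.

Section gaps.
Context {R : realType}.
Implicit Types (E : set R) (a b c d u v : R).

Definition gaps_in E u v : set (R * R) :=
  [set g | components (~` E) g /\ u <= g.1 /\ g.2 <= v].

Definition gap_xlog (g : R * R) : \bar R := (xlog (g.2 - g.1))%:E.

Lemma subset_itv_oo_le a b c d : a < b -> `]a, b[ `<=` `]c, d[ -> c <= a /\ b <= d.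
Proof.
move=> ab sub; split; rewrite leNgt; apply/negP.
- move=> ac; set m := Num.min b c.
  have mb : m <= b by rewrite ge_min lexx.
  have mc : m <= c by rewrite ge_min lexx orbT.
  have am : a < m by rewrite lt_min ab.
  have /sub : `]a, b[%classic ((a + m) / 2).
    by rewrite /= in_itv /=; apply/andP; split; lra.
  by rewrite /= in_itv /= => /andP[+ _]; lra.
- move=> db; set m := Num.max a d.
  have am : a <= m by rewrite le_max lexx.
  have dm : d <= m by rewrite le_max lexx orbT.
  have mb : m < b by rewrite gt_max ab.
  have /sub : `]a, b[%classic ((b + m) / 2).
    by rewrite /= in_itv /=; apply/andP; split; lra.
  by rewrite /= in_itv /= => /andP[_]; lra.
Qed.

Lemma components_itvD E c d g : E c -> E d ->
  components (`]c, d[ `\` E) g -> [/\ components (~` E) g, c <= g.1 & g.2 <= d].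
Proof.
case: g => a b Ec Ed [/= ab [sub [na nb]]].
have [ca bd] : c <= a /\ b <= d by apply: subset_itv_oo_le ab (fun x => fst \o sub x).
have in_cd x : c < x -> x < d -> `]c, d[%classic x by rewrite /= in_itv /= => -> ->.
have Ea : E a.
  have [<-//|ca'] := eqVneq c a; apply: contrapT => nEa; apply: na; split => //.
  by apply: in_cd; [rewrite lt_neqAle ca' | apply: lt_le_trans bd].
have Eb : E b.
  have [->//|bd'] := eqVneq b d; apply: contrapT => nEb; apply: nb; split => //.
  by apply: in_cd; [apply: le_lt_trans ca ab | rewrite lt_neqAle bd'].
by split => //; split => //; split; [move=> x /sub[] | split => /=; apply].
Qed.

Lemma closed_itv_hull E u v : closed E -> E `&` `[u, v] !=set0 ->
  exists c d, [/\ E c, E d, u <= c, d <= v & E `&` `[u, v] `<=` `[c, d]].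
Proof.
move=> E_closed Euv_ne; set A := E `&` `[u, v].
have A_closed : closed A by apply: closedI => //; exact: itv_closed.
have [A_lb A_ub] : lbound A u /\ ubound A v.
  by split=> x [_]; rewrite /= in_itv /= => /andP[].
have A_lb' : has_lbound A by exists u.
have A_ub' : has_ubound A by exists v.
have A_inf : A (inf A).
  apply: (itv_closed_infimums Euv_ne A_closed); split; first exact: ge_inf.
  by move=> y; exact: lb_le_inf.
have A_sup : A (sup A).
  apply: (itv_closed_supremums Euv_ne A_closed); split; first exact: ub_le_sup.
  by move=> y; exact: ge_sup.
exists (inf A), (sup A); split; [by case: A_inf|by case: A_sup| | |].
- exact: lb_le_inf.
- exact: ge_sup.
- by move=> x Ax; rewrite /= in_itv /= ge_inf ?ub_le_sup.
Qed.

Lemma local_entropy_le_gaps_in E c d u v : E c -> E d -> u <= c -> d <= v ->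
  (local_entropy E c d <= \esum_(g in gaps_in E u v) gap_xlog g)%E.
Proof.
move=> Ec Ed uc dv; apply: sub_esum => g /(components_itvD Ec Ed)[Eg cg gd].
by split => //; split; [apply: le_trans cg | apply: le_trans dv].
Qed.

Lemma xlog_ge0 (l : R) : 0 < l -> l <= 1 -> 0 <= xlog l.
Proof.
by move=> l0 l1; rewrite /xlog mulr_ge0 ?(ltW l0)// ln_ge0// invf_ge1.
Qed.

Section periodic.
Variable E : set R.
Hypothesis E_per : periodic1 E.

Lemma gap_length_le1 g : components (~` E) g -> g.2 - g.1 <= 1.
Proof.
move=> [g12 [sub [Eg1 _]]]; rewrite leNgt; apply/negP => g_long.
have /sub : `]g.1, g.2[%classic (g.1 + 1).
  by rewrite /= in_itv /=; apply/andP; split; lra.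
by apply; apply/(E_per g.1).1; apply: contrapT.
Qed.

Lemma gap_xlog_ge0 g : components (~` E) g -> (0 <= gap_xlog g)%E.
Proof.
move=> Eg; rewrite lee_fin xlog_ge0 ?gap_length_le1//.
by case: Eg => g12 _; rewrite subr_gt0.
Qed.

Hypothesis E_ent : finite_entropy E.

Lemma entropy_cells_small eta : 0 < eta -> exists2 lam : R, 0 < lam &
  forall n : nat, (0 < n)%N -> n%:R^-1 < lam ->
  (\sum_(j \in `I_n) \esum_(g in gaps_in E (j%:R / n%:R) (j.+1%:R / n%:R))
     gap_xlog g <= eta%:E)%E.
Proof.
move=> eta0.
have gap_ge0 g : components (~` E) g /\ 0 <= g.1 < 1 -> (0 <= gap_xlog g)%E.
  by case=> /gap_xlog_ge0.
have gap_pos g : components (~` E) g /\ 0 <= g.1 < 1 -> 0 < g.2 - g.1.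
  by case=> -[g12 _] _; rewrite subr_gt0.
have [lam lam0 tail] := esum_small_tail gap_ge0 gap_pos E_ent eta0.
exists lam => // n n0 n_lam.
set Y := fun j : nat => gaps_in E (j%:R / n%:R) (j.+1%:R / n%:R).
have Y_ge0 j : forall g, Y j g -> (0 <= gap_xlog g)%E by move=> g [/gap_xlog_ge0].
have esumY_ge0 j : j \in `I_n -> (0 <= \esum_(g in Y j) gap_xlog g)%E.
  by move=> _; apply: esum_ge0; exact: Y_ge0.
rewrite -esum_fset ?finite_II//.
rewrite -esum_bigcup; last 2 first.
- apply: sub_trivIset (subsetT _) _ => i j _ _ [g [[_ [ig gi]] [[g12 _] [jg gj]]]].
  by apply: (cell_overlap_eq n0); lra.
- by move=> g [j _ /Y_ge0].
apply: tail => [g [j /= jn [Eg [jg gj]]]|g [j /= jn [[g12 _] [jg gj]]]].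
- split => //; apply/andP; split; first exact: le_trans jg.
  have [g12 _] := Eg; apply: lt_le_trans g12 (le_trans gj _).
  by rewrite ler_pdivrMr ?ltr0n// mul1r ler_nat.
- by have := cell_width j n0; lra.
Qed.

End periodic.
End gaps.

Section measure_on_circle.
Context {R : realType} (mu : {measure set R -> \bar R}).

Lemma le_measure_setU (A B C : set R) : measurable A -> measurable B ->
  measurable C -> A `<=` B `|` C -> (mu A <= mu B + mu C)%E.
Proof.
move=> mA mB mC ABC; apply: le_trans (measureU2 mu mB mC).
by apply: le_measure ABC; apply: mem_set => //; exact: measurableU.
Qed.

Lemma arc_lift_open (a b : R) : open (arc_lift a b).
Proof.
have -> : arc_lift a b = \bigcup_(k in [set: int]) `]a + k%:~R, b + k%:~R[%classic.
  by apply/seteqP; split => x [k] /=; [exists k|]; rewrite ?in_itv //= => ? ?; exists k.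
by apply: bigcup_open => k _; exact: itv_open.
Qed.

Lemma measure_cells (n : nat) : (0 < n)%N -> mu `[0, 1[%classic =
  \sum_(j \in `I_n) mu `[j%:R / n%:R, j.+1%:R / n%:R[%classic.
Proof.
move=> n0; have n_pos : 0 < n%:R :> R by rewrite ltr0n.
rewrite -measure_fin_bigcup ?finite_II//; last first.
  move=> i j _ _ [x []]; rewrite /= !in_itv /= => /andP[ix xi] /andP[jx xj].
  by apply: (cell_overlap_eq n0); [apply: le_lt_trans ix xj|apply: le_lt_trans jx xi].
congr (mu _); apply/seteqP; split => [x|x [j /= jn]]; rewrite /= !in_itv /=.
  move=> /andP[x0 x1]; exists (Num.truncn (x * n%:R)); rewrite /= ?in_itv /=.
    have /andP[xn_ge _] := truncn_itv (mulr_ge0 x0 (ltW n_pos)).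
    by rewrite -(ltr_nat R) (le_lt_trans xn_ge)// -[ltRHS]mul1r ltr_pM2r.
  have /andP[xn_ge xn_lt] := truncn_itv (mulr_ge0 x0 (ltW n_pos)).
  by rewrite ler_pdivrMr// xn_ge ltr_pdivlMr.
move=> /andP[jx xj]; rewrite (le_trans _ jx)//=.
by apply: lt_le_trans xj _; rewrite ler_pdivrMr// mul1r ler_nat.
Qed.

Hypothesis mu_T : mu (~` `[0, 1[%classic) = 0%E.

Lemma measure_arc_lift (a b : R) : 0 <= a -> b <= 1 ->
  mu (arc_lift a b) = mu `]a, b[%classic.
Proof.
move=> a0 b1; have marc : measurable (arc_lift a b).
  by apply: open_measurable; exact: arc_lift_open.
apply/eqP; rewrite eq_le; apply/andP; split; last first.
  apply: le_measure; [apply: mem_set; exact: measurable_itv|exact: mem_set|].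
  by move=> x abx; exists 0; rewrite !addr0.
rewrite -[leRHS]adde0 -mu_T; apply: le_measure_setU => //; first exact: measurableC.
move=> x [k /andP[akx xbk]]; have [x01|] := pselect (`[0, 1[%classic x); last by right.
left; move: x01; rewrite /= !in_itv /= => /andP[x0 x1].
have k0 : k = 0.
  have k_lt1 : k%:~R < 1 :> R by lra.
  have k_gtN1 : (-1)%:~R < k%:~R :> R by change (-1 < k%:~R :> R); lra.
  by move: k_lt1 k_gtN1; rewrite ltrz1 ltr_int; lia.
by move: akx xbk; rewrite k0 !addr0 => -> ->.
Qed.

Hypothesis mu_fin01 : (mu `[0%R, 1%R[%classic < +oo)%E.

Lemma measure_lt_pinfty (B : set R) : measurable B -> (mu B < +oo)%E.
Proof.
move=> mB; apply: le_lt_trans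
  (_ : (mu `[0%R, 1%R[%classic + mu (~` `[0%R, 1%R[%classic) < +oo)%E).
  apply: le_measure_setU => //; first exact: measurableC.
  by move=> x _; case: (pselect (`[0, 1[%classic x)); [left|right].
by rewrite mu_T adde0.
Qed.

End measure_on_circle.

Section atomless.
Context {R : realType} (mu : {measure set R -> \bar R}).
Hypothesis mu_fin : forall B, measurable B -> (mu B < +oo)%E.
Hypothesis mu_atomless : forall x : R, mu [set x] = 0%E.

Lemma measure_ball_shrink (x : R) :
  (fun n : nat => mu (ball x n.+1%:R^-1)) @ \oo --> mu [set x].
Proof.
pose G (n : nat) : set R := ball x n.+1%:R^-1.
have GE : \bigcap_n G n = [set x].
  apply/seteqP; split => [y Gy|y ->{y} n _]; last first.
    have n_pos : 0 < n.+1%:R^-1 :> R by rewrite invr_gt0 ltr0n.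
    by rewrite /G ball_itv /= in_itv /= gtrBl ltrDl n_pos.
  apply: contrapT => /eqP yx.
  have yx0 : 0 < `|y - x| by rewrite normr_gt0 subr_eq0.
  have [n n_lt] : exists n : nat, n.+1%:R^-1 < `|y - x| :> R.
    by have [n ?] := filter_ex (near_infty_natSinv_lt (PosNum yx0)); exists n.
  have := Gy n I; rewrite /G ball_itv /= in_itv /=; move: n_lt.
  set e := n.+1%:R^-1; rewrite ltr_normr => /orP[] ? /andP[? ?]; lra.
have := @nonincreasing_cvg_mu _ _ _ mu G; rewrite GE; apply.
- by apply: mu_fin; exact: measurable_ball.
- by move=> n; exact: measurable_ball.
- exact: measurable_set1.
- apply/nonincreasing_seqP => n; apply/subsetPset => y.
  have : n.+2%:R^-1 <= n.+1%:R^-1 :> R by rewrite lef_pV2 ?posrE ?ltr0n// ler_nat.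
  rewrite /G !ball_itv /= !in_itv /=; set e1 := n.+1%:R^-1; set e2 := n.+2%:R^-1.
  by move=> ? /andP[? ?]; apply/andP; split; lra.
Qed.

Lemma increasing_seq_ge (f : nat -> nat) : increasing_seq f -> forall n, (n <= f n)%N.
Proof.
move=> /increasing_seqP f_incr; elim=> [//|n IHn].
exact: leq_ltn_trans IHn (f_incr n).
Qed.

(** Otherwise balls [ball x_n (1/(n+1))] of measure at least [delta] would
    have centres accumulating at a point all of whose small balls have measure
    at least [delta], contradicting [measure_ball_shrink]. *)
Lemma measure_ball_unif_small (delta : R) : 0 < delta -> exists2 r : R, 0 < r &
  forall x : R, 0 <= x <= 1 -> (mu (ball x r) < delta%:E)%E.
Proof.
move=> delta0; apply: contrapT => no_r.
have big n : exists x : R, 0 <= x <= 1 /\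
    (delta%:E <= mu (ball x n.+1%:R^-1))%E.
  apply: contrapT => no_x; apply: no_r; exists n.+1%:R^-1 => // x x01.
  by rewrite ltNge; apply/negP => ?; apply: no_x; exists x.
have [u u_big] := choice big.
have u_bnd : bounded_fun u.
  apply/ex_bound; first exact: (@globally_properfilter _ _ 0%N).
  by exists 1 => n _; have [/andP[u0 u1] _] := u_big n; rewrite /= ger0_norm.
have [f f_incr /cvg_ex[l ufl]] := bolzano_weierstrass u_bnd.
suff big_l m : (delta%:E <= mu (ball l m.+1%:R^-1))%E.
  have big_l_near : \forall m \near \oo, (delta%:E <= mu (ball l m.+1%:R^-1))%E.
    exact: nearW.
  have := lime_ge (cvgP _ (@measure_ball_shrink l)) big_l_near.
  rewrite (cvg_lim _ (@measure_ball_shrink l))// mu_atomless lee_fin.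
  by move=> /(_ _); rewrite leNgt delta0.
have gap0 : 0 < m.+1%:R^-1 - m.+2%:R^-1 :> R.
  by rewrite subr_gt0 ltf_pV2 ?posrE ?ltr0n// ltr_nat.
have [k [/= ul_k mk]] := filter_ex (filterI
  ((cvgrPdist_lt _ _).1 ufl _ gap0) (nbhs_infty_ge m.+1)).
have [_ /le_trans] := u_big (f k); apply; apply: le_measure.
- by apply: mem_set; exact: measurable_ball.
- by apply: mem_set; exact: measurable_ball.
have ek_le : (f k).+1%:R^-1 <= m.+2%:R^-1 :> R.
  rewrite lef_pV2 ?posrE ?ltr0n// ler_nat ltnS.
  exact: leq_trans mk (increasing_seq_ge f_incr k).
move: ul_k ek_le; rewrite !ball_itv /=.
set e := m.+1%:R^-1; set e' := m.+2%:R^-1; set ek := (f k).+1%:R^-1.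
rewrite ltr_norml => /andP[? ?] ? y; rewrite /= !in_itv /= => /andP[? ?].
by apply/andP; split; lra.
Qed.

End atomless.

Section supported_measure.
Context {R : realType} (mu : {measure set R -> \bar R}) (E : set R).
Hypothesis E_closed : closed E.
Hypothesis mu_supp : mu (~` E) = 0%E.
Hypothesis mu_atomless : forall x : R, mu [set x] = 0%E.

Lemma measure_itv_le_hull (u v c d : R) : E `&` `[u, v] `<=` `[c, d] ->
  (mu `[u, v[%classic <= mu `]c, d[%classic)%E.
Proof.
move=> hull; have mEC : measurable (~` E).
  by apply: measurableC; exact: closed_measurable.
have m_ends : measurable ([set c] `|` [set d]) by apply: measurableU.
have m_rest : measurable ([set c] `|` [set d] `|` ~` E) by exact: measurableU.
have rest0 : (mu ([set c] `|` [set d] `|` ~` E) <= 0)%E.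
  apply: le_trans (le_measure_setU mu m_rest m_ends mEC (fun x h => h)) _.
  rewrite mu_supp adde0.
  apply: le_trans (le_measure_setU mu m_ends (measurable_set1 c)
    (measurable_set1 d) (fun x h => h)) _.
  by rewrite !mu_atomless adde0.
apply: le_trans (le_measure_setU mu (measurable_itv `[u, v[)
  (measurable_itv `]c, d[) m_rest _) _.
- move=> x uvx; have [Ex|] := pselect (E x); last by right; right.
  have /hull : (E `&` `[u, v]) x.
    by split=> //; move: uvx; rewrite /= !in_itv /= => /andP[-> /ltW].
  rewrite /= !in_itv /= => /andP[cx xd].
  have [<-|cx'] := eqVneq c x; first by right; left; left.
  have [->|xd'] := eqVneq x d; first by right; left; right.
  by left; rewrite !lt_neqAle cx xd cx' xd'.
- by rewrite -[leRHS]adde0 leeD.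
Qed.

Lemma cell_hull (u v : R) : (0 < mu `[u, v[%classic)%E -> exists c d,
  [/\ u <= c, c < d, d <= v, (mu `[u, v[%classic <= mu `]c, d[%classic)%E &
    (local_entropy E c d <= \esum_(g in gaps_in E u v) gap_xlog g)%E].
Proof.
move=> mu_pos; have mEC : measurable (~` E).
  by apply: measurableC; exact: closed_measurable.
have Euv_ne : E `&` `[u, v] !=set0.
  apply: contrapT => Euv0; move: mu_pos; apply/negP; rewrite -leNgt -mu_supp.
  apply: le_measure; [apply: mem_set; exact: measurable_itv|exact: mem_set|].
  move=> x uvx Ex; apply: Euv0; exists x; split => //.
  by move: uvx; rewrite /= !in_itv /= => /andP[-> /ltW].
have [c [d [Ec Ed uc dv hull]]] := closed_itv_hull E_closed Euv_ne.
have mu_le := measure_itv_le_hull hull.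
have cd : c < d.
  rewrite ltNge; apply/negP => dc; move: (lt_le_trans mu_pos mu_le).
  by rewrite set_itv_ge ?measure0 ?ltxx// bnd_simp -leNgt.
by exists c, d; split => //; exact: local_entropy_le_gaps_in.
Qed.

Hypothesis E_per : periodic1 E.
Hypothesis mu_T : mu (~` `[0, 1[%classic) = 0%E.
Hypothesis mu_fin01 : (mu `[0%R, 1%R[%classic < +oo)%E.

Lemma arc_of_low_entropy_cell (eps delta u v : R) : 0 < eps -> 0 <= u -> v <= 1 ->
  (mu `[u, v]%classic < delta%:E)%E ->
  (\esum_(g in gaps_in E u v) gap_xlog g < eps%:E * mu `[u, v[%classic)%E ->
  exists a b : R, a < b /\ b <= a + 1 /\
    (0 < mu (arc_lift a b))%E /\ (mu (arc_lift a b) < delta%:E)%E /\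
    (local_entropy E a b * ((fine (mu (arc_lift a b)))^-1)%:E < eps%:E)%E.
Proof.
move=> eps0 u0 v1 mu_delta ent_lt.
have cell_pos : (0 < mu `[u, v[%classic)%E.
  rewrite lt0e measure_ge0 andbT; apply: contraTneq ent_lt => ->.
  by rewrite mule0 -leNgt; apply: esum_ge0 => g [/(gap_xlog_ge0 E_per)].
have [c [d [uc cd dv mu_le ent_le]]] := cell_hull cell_pos.
have [c0 d1] : 0 <= c /\ d <= 1 by split; [apply: le_trans uc|apply: le_trans dv _].
have m_fin : mu `]c, d[%classic \is a fin_num.
  by rewrite ge0_fin_numE// measure_lt_pinfty//; exact: measurable_itv.
have m_pos := lt_le_trans cell_pos mu_le.
exists c, d; rewrite (measure_arc_lift mu_T c0 d1).
split=> //; split; first by rewrite (le_trans d1)// lerDr.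
split=> //; split.
- apply: le_lt_trans mu_delta; apply: le_measure.
  + by apply: mem_set; exact: measurable_itv.
  + by apply: mem_set; exact: measurable_itv.
  + exact: subset_itvW.
- rewrite -(fineK m_fin) in m_pos mu_le *; rewrite lte_fin in m_pos.
  rewrite lte_pdivrMr// (le_lt_trans ent_le)// (lt_le_trans ent_lt)//.
  by rewrite lee_wpmul2l// lee_fin ltW.
Qed.

Hypothesis E_ent : finite_entropy E.
Hypothesis mu_nz : mu `[0, 1[%classic != 0%E.

(** Summed over the cells, the gap entropies total at most [eps mu(T) / 2]
    while [eps mu(cell)] totals [eps mu(T)], so some cell does better. *)
Lemma cell_entropy_lt (eps : R) : 0 < eps -> exists2 lam : R, 0 < lam &
  forall n : nat, n.+1%:R^-1 < lam -> exists2 j, `I_n.+1 j &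
  (\esum_(g in gaps_in E (j%:R / n.+1%:R) (j.+1%:R / n.+1%:R)) gap_xlog g <
    eps%:E * mu `[(j%:R / n.+1%:R)%R, (j.+1%:R / n.+1%:R)%R[%classic)%E.
Proof.
move=> eps0; set M := fine (mu `[0%R, 1%R[%classic).
have ME : mu `[0%R, 1%R[%classic = M%:E by rewrite fineK// ge0_fin_numE.
have M0 : 0 < M by rewrite -lte_fin -ME lt0e mu_nz measure_ge0.
have eta0 : 0 < eps * M / 2 by rewrite divr_gt0 ?mulr_gt0.
have [lam lam0 ent_small] := entropy_cells_small E_per E_ent eta0.
exists lam => // n n_lam; apply: fsume_lt_exists; first exact: finite_II.
rewrite -ge0_mule_fsumr; last by move=> k; exact: measure_ge0.
rewrite -measure_cells// ME; apply: le_lt_trans (ent_small n.+1 isT n_lam) _.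
by rewrite -EFinM lte_fin ltr_pdivrMr// ltr_pMr ?mulr_gt0// ltr1n.
Qed.

End supported_measure.

Theorem lemma2p2 (R : realType) (mu : {measure set R -> \bar R}) (E : set R)
  (* E is a closed subset of T = R/Z *)
  (E_per : periodic1 E) (E_closed : closed E)
  (* m(E) = 0 *)
  (E_null : (lebesgue_measure (E `&` (`[0%R, 1%R[%classic : set R)) = 0)%E)
  (* E has finite entropy *)
  (E_ent : finite_entropy E)
  (* mu is a (finite) positive measure on T *)
  (mu_T : (mu (~` (`[0%R, 1%R[%classic : set R)) = 0)%E)
  (mu_fin : (mu (`[0%R, 1%R[%classic : set R) < +oo)%E)
  (* non-trivial *)
  (mu_nz : (mu (`[0%R, 1%R[%classic : set R) != 0)%E)
  (* continuous (atomless) *)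
  (mu_atomless : forall x : R, (mu [set x] = 0)%E)
  (* singular with respect to Lebesgue measure *)
  (mu_sing : exists A : set R, measurable A /\
     (lebesgue_measure A = 0)%E /\ (mu (~` A) = 0)%E)
  (* supported by E *)
  (mu_supp : (mu (~` E) = 0)%E) :
  forall eps delta : R, 0 < eps -> 0 < delta ->
  exists a b : R, a < b /\ b <= a + 1 /\
    (0 < mu (arc_lift a b))%E /\ (mu (arc_lift a b) < delta%:E)%E /\
    (local_entropy E a b * ((fine (mu (arc_lift a b)))^-1)%:E < eps%:E)%E.
Proof.
move=> eps delta eps0 delta0.
have mu_fin_all := measure_lt_pinfty mu_T mu_fin.
have [lam lam0 cell_lt] := cell_entropy_lt E_per mu_fin E_ent mu_nz eps0.
have [r r0 mu_small] := measure_ball_unif_small mu_fin_all mu_atomless delta0.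
have [n] : exists n : nat, n.+1%:R^-1 < Num.min lam r :> R.
  have min_pos : 0 < Num.min lam r by rewrite lt_min lam0 r0.
  by have [n ?] := filter_ex (near_infty_natSinv_lt (PosNum min_pos)); exists n.
rewrite lt_min => /andP[n_lam n_r].
have [j /= jn ent_lt] := cell_lt n n_lam.
have u01 : 0 <= (j%:R / n.+1%:R : R) <= 1.
  by rewrite divr_ge0//= ler_pdivrMr// mul1r ler_nat ltnW.
apply: (arc_of_low_entropy_cell E_closed mu_supp mu_atomless E_per mu_T mu_fin)
  eps0 _ _ _ ent_lt.
- by case/andP: u01.
- by rewrite ler_pdivrMr// mul1r ler_nat.
- apply: le_lt_trans (mu_small _ u01); apply: le_measure.
  + by apply: mem_set; exact: measurable_itv.
  + by apply: mem_set; exact: measurable_ball.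
  + by apply: itv_sub_ball => //; rewrite cell_width.
Qed.
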